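(* Let $0<p<1/2$ be a constant, let $\varepsilon,\delta\in(0,1)$, and let $T$ be a tree with $n$ edges, each of which is either realized or not, accessed through a 2-sided noisy oracle with error probability $p$. Consider the following algorithm $\mathcal{A}$ (with parameters $\varepsilon,\delta,p$). Set $c=\lceil \log_{\frac{1-p}{p}}(1/\delta)\rceil$ (the threshold) and a global budget $B=\lceil \frac{1}{\varepsilon}\cdot\frac{1}{1-2p}\rceil\cdot c\cdot n$. Process the edges of $T$ one after another in a fixed order. For the current edge $e$, set a counter to $0$; while the counter is $<c$ and $B>0$: query $e$, decrease $B$ by $1$, and increase the counter by $1$ if the answer is ``Yes'' and decrease it by $1$ if the answer is ``No''. After this loop, if $B=0$, output False (``disconnected'') and stop; otherwise move to the next edge. If all edges are processed, output True (``connected''). Then: if all edges of $T$ are realized ($T$ is connected), $\mathcal{A}$ outputs True with probability at least $1-\varepsilon$; if at least one edge of $T$ is not realized ($T$ is disconnected), $\mathcal{A}$ outputs False with probability at least $1-\delta$; and $\mathcal{A}$ performs at most $O\!\left(\frac{1}{\varepsilon}\, n\log\frac{1}{\delta}\right)$ queries.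
   Context: Noisy edge-query model: each edge of a given graph is either realized or non-realized (fixed arbitrarily, possibly adversarially, in advance). An algorithm can query an oracle on an edge $e$, asking ``Is $e$ realized?'', and receives ``Yes'' or ``No''; each query costs $1$. Answers to distinct queries (including repeated queries on the same edge) are independent. In the 2-sided error regime with error probability $p<1/2$ (a constant), each answer is wrong (``No'' for a realized edge, ``Yes'' for a non-realized edge) with probability $p$ and correct with probability $1-p$. A tree is called connected if all its edges are realized and disconnected otherwise. *)

From mathcomp Require Import all_boot all_order all_algebra.
From mathcomp Require Import all_classical all_reals all_analysis.
Set Implicit Arguments. Unset Strict Implicit. Unset Printing Implicit Defensive.
Import Order.TTheory GRing.Theory Num.Theory.
Local Open Scope ring_scope.

(* Source of randomness: omega k = true  iff the answer to the k-th query
   (counting all queries of the run, k = 0,1,2,...) is CORRECT. *)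

Fixpoint edge_loop (c : int) (truth : bool) (cnt : int) (budget pos : nat)
  (omega : nat -> bool) : nat * nat :=
  match budget with
  | 0%N => (0%N, pos)
  | b.+1 =>
      if cnt < c then
        let ans := if omega pos then truth else ~~ truth in
        edge_loop c truth (if ans then cnt + 1 else cnt - 1) b pos.+1 omega
      else (budget, pos)
  end.

(* Outer loop over the edges (list of their realization statuses, in the
   fixed processing order).  Returns (output, index of next query), the
   second component being the number of queries made when started at 0. *)
Fixpoint run_edges (c : nat) (edges : seq bool) (budget pos : nat)
  (omega : nat -> bool) : bool * nat :=
  match edges with
  | [::] => (true, pos)
  | e :: es =>
      let bp := edge_loop c%:Z e 0 budget pos omega in
      if bp.1 == 0%N then (false, bp.2)
      else run_edges c es bp.1 bp.2 omega
  end.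

Section Alg.
Variable R : realType.

Definition threshold (p delta : R) : nat :=
  `|Num.ceil (ln (delta^-1) / ln ((1 - p) / p))|%N.

Definition budget (p eps delta : R) (n : nat) : nat :=
  (`|Num.ceil (eps^-1 * (1 - 2 * p)^-1)|%N * threshold p delta * n)%N.

Definition alg (p eps delta : R) (n : nat) (r : 'I_n -> bool)
  (omega : nat -> bool) : bool * nat :=
  run_edges (threshold p delta) [seq r i | i <- enum 'I_n]
    (budget p eps delta n) 0 omega.

(* Probability space of the answers: N independent queries, each answer
   correct with probability 1 - p.  omega : {ffun 'I_N -> bool} is extended
   to nat (positions >= N never get used when N >= number of queries). *)
Definition ext (N : nat) (w : {ffun 'I_N -> bool}) (k : nat) : bool :=
  match insub k with Some i => w i | None => true end.

Definition weight (p : R) (N : nat) (w : {ffun 'I_N -> bool}) : R :=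
  \prod_(i < N) (if w i then 1 - p else p).

Definition prob (p : R) (N : nat) (E : (nat -> bool) -> bool) : R :=
  \sum_(w : {ffun 'I_N -> bool} | E (ext w)) weight p w.

(* Probability that A outputs [b]; the algorithm makes at most
   budget p eps delta n queries, so N := that budget suffices. *)
Definition prob_output (p eps delta : R) (n : nat) (r : 'I_n -> bool)
  (b : bool) : R :=
  prob p (budget p eps delta n) (fun omega => (alg p eps delta r omega).1 == b).

End Alg.

From mathcomp Require Import all_boot all_order all_algebra.
From mathcomp Require Import all_classical all_reals all_analysis.
From mathcomp Require Import ring lra zify.
Set Implicit Arguments. Unset Strict Implicit. Unset Printing Implicit Defensive.
Import Order.TTheory GRing.Theory Num.Theory.
Local Open Scope ring_scope.

(* Write r = p / (1 - p) and mu = 1 - 2p.  On each edge the counter performs a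
   +-1 random walk, stopped at the threshold c or when the budget runs out.
   On an unrealized edge it steps up with probability p only, and r^(c - cnt)
   is a martingale, so the edge is passed with probability at most
   r^c <= delta; a disconnected tree is accepted only if that edge is passed.
   On a realized edge the walk drifts up by mu per query, so (c - cnt) / mu
   plus the number of queries made is a martingale and each edge costs at
   most c / mu queries in expectation.  A connected tree is rejected only when
   all B queries are spent, which by Markov's inequality has probability at
   most n c / (mu B) <= eps.  Both martingale bounds are one optional-stopping
   argument, run on the expectation over the first N answers, which is
   computed by conditioning on the first answer.  Finally the number of
   queries never exceeds B = O(n log(1/delta) / eps). *)

Definition scons (a : bool) (w : nat -> bool) : nat -> bool :=
  fun k => if k is k'.+1 then w k' else a.

Lemma edge_loop_scons c t cnt b pos a w :
  edge_loop c t cnt b pos.+1 (scons a w) =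
  ((edge_loop c t cnt b pos w).1, (edge_loop c t cnt b pos w).2.+1).
Proof.
elim: b cnt pos => [|b IHb] cnt pos //=.
by case: ifP => // _; rewrite IHb.
Qed.

Lemma edge_loop_step_scons c t cnt b a w : cnt < c ->
  edge_loop c t cnt b.+1 0 (scons a w) =
  let bq := edge_loop c t (if (if a then t else ~~ t) then cnt + 1 else cnt - 1) b 0 w in
  (bq.1, bq.2.+1).
Proof. by move=> /= ->; rewrite edge_loop_scons. Qed.

Lemma edge_loop_budget c t cnt b pos w :
  ((edge_loop c t cnt b pos w).1 + (edge_loop c t cnt b pos w).2 = b + pos)%N.
Proof.
elim: b cnt pos => [|b IHb] cnt pos //=.
by case: ifP => _ //; rewrite IHb addnS.
Qed.

Definition run_after (c : nat) (es : seq bool) (b pos : nat) (w : nat -> bool)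
  : bool * nat :=
  if b == 0%N then (false, pos) else run_edges c es b pos w.

Lemma run_edges_scons c es b pos a w :
  run_edges c es b pos.+1 (scons a w) =
  ((run_edges c es b pos w).1, (run_edges c es b pos w).2.+1).
Proof.
elim: es b pos => [|e es IHes] b pos //=.
by rewrite edge_loop_scons /=; case: ifP.
Qed.

Lemma run_after_scons c es b pos a w :
  run_after c es b pos.+1 (scons a w) =
  ((run_after c es b pos w).1, (run_after c es b pos w).2.+1).
Proof. by rewrite /run_after run_edges_scons; case: ifP. Qed.

Lemma run_edges_queries_le c es b pos w : ((run_edges c es b pos w).2 <= b + pos)%N.
Proof.
elim: es b pos => [|e es IHes] b pos /=; first exact: leq_addl.
rewrite -(edge_loop_budget c e 0 b pos w); case: ifP => [/eqP -> //|_].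
exact: IHes.
Qed.

Lemma run_edges_reject_queries c es b pos w :
  ~~ (run_edges c es b pos w).1 -> (run_edges c es b pos w).2 = (b + pos)%N.
Proof.
elim: es b pos => [|e es IHes] b pos //=.
rewrite -(edge_loop_budget c e 0 b pos w); case: ifP => [/eqP -> //|_].
exact: IHes.
Qed.

Section Expectation.
Variables (R : realFieldType) (p : R).

(* Answers beyond the first [N] are taken to be correct, as in [ext]. *)
Fixpoint expect (N : nat) (F : (nat -> bool) -> R) : R :=
  match N with
  | 0%N => F (fun=> true)
  | N.+1 => (1 - p) * expect N (fun w => F (scons true w)) +
            p * expect N (fun w => F (scons false w))
  end.

Lemma expectS N F : expect N.+1 F =
  (1 - p) * expect N (fun w => F (scons true w)) +
  p * expect N (fun w => F (scons false w)).
Proof. by []. Qed.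

Lemma expect_affine N a k F : expect N (fun w => a + k * F w) = a + k * expect N F.
Proof.
elim: N a k F => [|N IHN] a k F //=.
by rewrite IHN [in X in _ + p * X]IHN; ring.
Qed.

Lemma expect_cst N a : expect N (fun=> a) = a.
Proof. by elim: N => [|N IHN] //=; rewrite !IHN; ring. Qed.

Lemma expect_add N a F : expect N (fun w => a + F w) = a + expect N F.
Proof.
rewrite -[X in _ = _ + X]mul1r -expect_affine.
by congr expect; apply: funext => w; rewrite mul1r.
Qed.

Lemma expect_scale N k F : expect N (fun w => k * F w) = k * expect N F.
Proof.
rewrite -[RHS]add0r -expect_affine.
by congr expect; apply: funext => w; rewrite add0r.
Qed.

Lemma expect_compl N (E : (nat -> bool) -> bool) :
  expect N (fun w => (~~ E w)%:R) = 1 - expect N (fun w => (E w)%:R).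
Proof.
rewrite -mulN1r -expect_affine; congr expect; apply: funext => w.
by case: (E w) => /=; rewrite ?mulr1 ?mulr0 ?addr0 ?subrr.
Qed.

Hypothesis p01 : 0 <= p <= 1.

Lemma expect_le N F G : (forall w, F w <= G w) -> expect N F <= expect N G.
Proof.
have [p0 p1] := andP p01; have q0 : 0 <= 1 - p by rewrite subr_ge0.
elim: N F G => [|N IHN] F G FG /=; first exact: FG.
by apply: lerD; apply: ler_wpM2l => //; apply: IHN => w; apply: FG.
Qed.

Lemma expect_markov N (E : (nat -> bool) -> bool) X a :
  (forall w, 0 <= X w) -> (forall w, E w -> a <= X w) ->
  a * expect N (fun w => (E w)%:R) <= expect N X.
Proof.
move=> X0 EX; rewrite -expect_scale; apply: expect_le => w.
by case: (boolP (E w)) => [/EX|_]; rewrite ?mulr1 ?mulr0.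
Qed.

(* [H b pos w] scores the rest of the run, started with budget [b] at query
   index [pos]; each earlier query adds [d] to it.  The hypothesis [b <= N]
   ensures that the loop only reads the [N] random answers. *)
Lemma expect_edge_loop_le (c : int) (t : bool) (d : R) (phi : int -> R)
    (H : nat -> nat -> (nat -> bool) -> R) :
  (forall b pos a w, H b pos.+1 (scons a w) = d + H b pos w) ->
  (forall cnt N, cnt <= c -> expect N (H 0%N 0%N) <= phi cnt) ->
  (forall b N, (b <= N)%N -> expect N (H b 0%N) <= phi c) ->
  (forall cnt, cnt < c ->
     d + ((1 - p) * phi (if t then cnt + 1 else cnt - 1) +
          p * phi (if t then cnt - 1 else cnt + 1)) <= phi cnt) ->
  forall b N cnt, (b <= N)%N -> cnt <= c ->
  expect N (fun w => H (edge_loop c t cnt b 0 w).1 (edge_loop c t cnt b 0 w).2 w)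
    <= phi cnt.
Proof.
move=> Hshift Hexhausted Haccept Hsuper.
have [p0 p1] := andP p01; have q0 : 0 <= 1 - p by rewrite subr_ge0.
elim=> [|b IHb] N cnt bN cnt_c; first exact: Hexhausted.
have [cnt_lt|] := ltP cnt c; last first.
  move=> c_cnt; have -> : cnt = c by apply/le_anti; rewrite cnt_c c_cnt.
  by rewrite /= ltxx; apply: Haccept.
case: N bN => // N bN.
pose next a := if (if a then t else ~~ t) then cnt + 1 else cnt - 1.
have E a :
    expect N (fun w => H (edge_loop c t cnt b.+1 0 (scons a w)).1
                         (edge_loop c t cnt b.+1 0 (scons a w)).2 (scons a w)) =
    d + expect N (fun w => H (edge_loop c t (next a) b 0 w).1
                             (edge_loop c t (next a) b 0 w).2 w).
  rewrite -expect_add; congr expect; apply: funext => w.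
  by rewrite edge_loop_step_scons //= Hshift.
have next_c a : next a <= c by rewrite /next; case: ifP => _; lia.
rewrite expectS (E true) (E false).
apply: le_trans (Hsuper _ cnt_lt).
have IHa a := IHb N (next a) bN (next_c a).
have := ler_wpM2l q0 (IHa true); have := ler_wpM2l p0 (IHa false).
have -> : next false = if t then cnt - 1 else cnt + 1 by rewrite /next; case: (t).
rewrite /next /=; lra.
Qed.

End Expectation.

Definition ffun_cons N (a : bool) (w : {ffun 'I_N -> bool})
  : {ffun 'I_N.+1 -> bool} :=
  [ffun i => if unlift ord0 i is Some j then w j else a].

Lemma ext_ffun_cons N a (w : {ffun 'I_N -> bool}) : ext (ffun_cons a w) = scons a (ext w).
Proof.
apply: funext => -[|k]; rewrite /ext /=.
  case: insubP => // i _ i0.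
  have -> : i = ord0 by apply: val_inj.
  by rewrite ffunE unlift_none.
case: insubP => [i ik Ei|]; case: insubP => [j jk Ej|] //=.
- have -> : i = lift ord0 j by apply: val_inj; rewrite /= Ei Ej.
  by rewrite ffunE liftK.
- by rewrite -ltnS ik.
- by rewrite ltnS jk.
Qed.

Lemma sum_ffunS (V : nmodType) N (F : {ffun 'I_N.+1 -> bool} -> V) :
  \sum_w F w = \sum_(a : bool) \sum_(w : {ffun 'I_N -> bool}) F (ffun_cons a w).
Proof.
rewrite pair_bigA /= (reindex (fun x => ffun_cons x.1 x.2)) //.
exists (fun w : {ffun 'I_N.+1 -> bool} => (w ord0, [ffun j => w (lift ord0 j)])).
  move=> [a w] _; rewrite /= ffunE unlift_none; congr pair.
  by apply/ffunP => j; rewrite !ffunE liftK.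
move=> w _.
by apply/ffunP => i; rewrite ffunE; case: unliftP => [j ->|->]; rewrite ?ffunE.
Qed.

Section Probability.
Variables (R : realType) (p : R).

Lemma weight_ffun_cons N a (w : {ffun 'I_N -> bool}) :
  weight p (ffun_cons a w) = (if a then 1 - p else p) * weight p w.
Proof.
rewrite /weight big_ord_recl ffunE unlift_none; congr (_ * _).
by apply: eq_bigr => i _; rewrite ffunE liftK.
Qed.

Lemma sum_weight_expect N F :
  \sum_(w : {ffun 'I_N -> bool}) weight p w * F (ext w) = expect p N F.
Proof.
elim: N F => [|N IHN] F.
  rewrite (big_pred1 [ffun=> true]) => [|w]; last by apply/esym/eqP/ffunP => -[].
  rewrite /weight big_ord0 mul1r /=; congr F; apply: funext => k.
  by rewrite /ext; case: insubP => // -[].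
rewrite sum_ffunS big_bool expectS -!IHN !mulr_sumr.
by congr (_ + _); apply: eq_bigr => w _; rewrite weight_ffun_cons ext_ffun_cons mulrA.
Qed.

Lemma prob_expect N E : prob p N E = expect p N (fun w => (E w)%:R).
Proof.
rewrite /prob -sum_weight_expect big_mkcond /=; apply: eq_bigr => w _.
by case: (E (ext w)); rewrite ?mulr1 ?mulr0.
Qed.

End Probability.

Lemma absz_ceil_bounds (R : archiRealFieldType) (x : R) :
  0 <= x -> x <= (`|Num.ceil x|%N)%:R <= x + 1.
Proof.
move=> x_ge0; rewrite natr_absz ger0_norm ?ceil_ge0; last exact: lt_le_trans x_ge0.
have /andP[lo hi] := ceil_itv x; rewrite hi /=.
by move: lo; rewrite intrB; lra.
Qed.

Section Algorithm.
Variables (R : realType) (p : R).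
Hypotheses (p_gt0 : 0 < p) (p_lt_half : p < 1 / 2).

Let q_gt0 : 0 < 1 - p. Proof. by have := p_lt_half; lra. Qed.
Let mu_gt0 : 0 < 1 - 2 * p. Proof. by have := p_lt_half; lra. Qed.
Let p01 : 0 <= p <= 1. Proof. by rewrite (ltW p_gt0) /=; have := p_lt_half; lra. Qed.

Lemma expect_run_edges_accept_le (c : nat) es : false \in es ->
  forall b N, (b <= N)%N ->
  expect p N (fun w => ((run_edges c es b 0 w).1)%:R) <= (p / (1 - p)) ^+ c.
Proof.
set r := p / (1 - p); have r_gt0 : 0 < r by rewrite divr_gt0.
elim: es => // e es IHes es_false b N bN.
pose H b pos w : R := ((run_after c es b pos w).1)%:R.
have Hshift b' pos a w : H b' pos.+1 (scons a w) = 0 + H b' pos w.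
  by rewrite /H run_after_scons add0r.
have H0 M : expect p M (H 0%N 0%N) = 0 by apply: expect_cst.
have -> : (fun w => ((run_edges c (e :: es) b 0 w).1)%:R) =
          (fun w => H (edge_loop c e 0 b 0 w).1 (edge_loop c e 0 b 0 w).2 w) by [].
case: e es_false => [es_false|_].
  apply: (@expect_edge_loop_le _ _ p01 c true 0 (fun=> r ^+ c) H) => //.
  - by move=> cnt M _; rewrite H0 exprn_ge0 // ltW.
  - by move=> [|b'] M bM; [rewrite H0 exprn_ge0 // ltW | apply: IHes].
  - by move=> cnt _; rewrite add0r -mulrDl subrK mul1r.
(* (1 - p) r = p and p / r = 1 - p make r^(c - cnt) a martingale. *)
pose phi cnt := r ^ (c%:Z - cnt).
apply: le_trans (@expect_edge_loop_le _ _ p01 c false 0 phi H _ _ _ _ b N 0 bN _) _;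
  rewrite /phi ?subr0 //.
- by move=> cnt M _; rewrite H0 exprz_ge0 // ltW.
- move=> b' M _; rewrite subrr expr0z -(expect_cst p M 1).
  by apply: expect_le => // w; rewrite lern1 leq_b1.
move=> cnt _ /=.
have -> : c%:Z - (cnt - 1) = (c%:Z - cnt) + 1 by lia.
have -> : c%:Z - (cnt + 1) = (c%:Z - cnt) + -1 by lia.
move: (c%:Z - cnt) => k.
rewrite !exprzDr ?unitfE ?gt_eqF // expr1z exprN1 add0r.
rewrite [X in X <= _](_ : _ = r ^ k) // /r; field.
by rewrite !gt_eqF.
Qed.

Lemma expect_run_edges_queries_le (c : nat) es : all id es ->
  forall b N, (b <= N)%N ->
  expect p N (fun w => ((run_edges c es b 0 w).2)%:R)
    <= (size es * c)%:R / (1 - 2 * p).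
Proof.
set m := (1 - 2 * p)^-1; have m_ge0 : 0 <= m by rewrite invr_ge0 ltW.
have mu_m : (1 - 2 * p) * m = 1 by rewrite mulfV ?gt_eqF.
elim: es => [_ b N _|e es IHes /andP[-> es_true] b N bN] /=.
  by rewrite expect_cst mul0n mul0r.
set A := (size es * c)%:R * m; have A_ge0 : 0 <= A by rewrite mulr_ge0.
pose H b pos w : R := ((run_after c es b pos w).2)%:R.
have Hshift b' pos a w : H b' pos.+1 (scons a w) = 1 + H b' pos w.
  by rewrite /H run_after_scons mulrS.
have H0 M : expect p M (H 0%N 0%N) = 0 by apply: expect_cst.
have -> : (fun w => ((run_edges c (true :: es) b 0 w).2)%:R) =
          (fun w => H (edge_loop c true 0 b 0 w).1 (edge_loop c true 0 b 0 w).2 w) by [].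
pose phi cnt := (c%:Z - cnt)%:~R * m + A.
apply: le_trans (@expect_edge_loop_le _ _ p01 c true 1 phi H _ _ _ _ b N 0 bN _) _;
  rewrite /phi //.
- move=> cnt M cnt_c; rewrite H0 addr_ge0 // mulr_ge0 //.
  by rewrite ler0z subr_ge0.
- move=> [|b'] M bM; rewrite subrr mul0r add0r; first by rewrite H0.
  exact: IHes.
- move=> cnt _.
  have -> : c%:Z - (cnt + 1) = (c%:Z - cnt) - 1 by lia.
  have -> : c%:Z - (cnt - 1) = (c%:Z - cnt) + 1 by lia.
  move: (c%:Z - cnt) => k; rewrite intrB intrD.
  rewrite [X in X <= _](_ : _ = k%:~R * m + A + (1 - (1 - 2 * p) * m)); last by ring.
  by rewrite mu_m subrr addr0.
by rewrite subr0 -pmulrn mulSn natrD mulrDl.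
Qed.

Lemma ln_odds_gt0 : 0 < ln ((1 - p) / p).
Proof. by rewrite ln_gt0 // ltr_pdivlMr // mul1r; have := p_lt_half; lra. Qed.

Section Threshold.
Variable delta : R.
Hypothesis delta01 : 0 < delta < 1.

Let log_ratio_gt0 : 0 < ln delta^-1 / ln ((1 - p) / p).
Proof.
have [delta_gt0 delta_lt1] := andP delta01.
by rewrite divr_gt0 ?ln_odds_gt0 // ln_gt0 // invf_gt1.
Qed.

Lemma threshold_bounds : ln delta^-1 / ln ((1 - p) / p) <= (threshold p delta)%:R
  <= ln delta^-1 / ln ((1 - p) / p) + 1.
Proof. exact/absz_ceil_bounds/ltW. Qed.

Lemma threshold_gt0 : (0 < threshold p delta)%N.
Proof.
have /andP[lo _] := threshold_bounds.
by rewrite -(ltr0n R); apply: lt_le_trans lo.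
Qed.

Lemma expr_threshold_le : (p / (1 - p)) ^+ threshold p delta <= delta.
Proof.
have [delta_gt0 _] := andP delta01.
have /andP[lo _] := threshold_bounds.
rewrite -invf_div exprVn -[X in _ <= X]invrK.
rewrite lef_pV2 ?posrE ?exprn_gt0 ?invr_gt0 ?divr_gt0 //.
rewrite -ler_ln ?posrE ?exprn_gt0 ?invr_gt0 ?divr_gt0 // lnXn ?divr_gt0 //.
by rewrite -mulr_natr mulrC -ler_pdivrMr ?ln_odds_gt0.
Qed.

End Threshold.

Lemma budget_ge eps delta n : 0 < eps ->
  (n * threshold p delta)%:R / (1 - 2 * p) <= eps * (budget p eps delta n)%:R.
Proof.
move=> eps_gt0; set x := eps^-1 * (1 - 2 * p)^-1.
have /andP[x_le _] : x <= (`|Num.ceil x|%N)%:R <= x + 1.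
  by apply: absz_ceil_bounds; rewrite mulr_ge0 // invr_ge0 ltW.
have mu_inv_le : (1 - 2 * p)^-1 <= eps * (`|Num.ceil x|%N)%:R.
  by have := ler_wpM2l (ltW eps_gt0) x_le; rewrite /x mulrA mulfV ?lt0r_neq0 // mul1r.
rewrite /budget -/x !natrM.
set X := (`|Num.ceil x|%N)%:R; set c := (threshold p delta)%:R.
rewrite (_ : _ / _ = (1 - 2 * p)^-1 * (c * n%:R)); last by ring.
rewrite (_ : eps * _ = eps * X * (c * n%:R)); last by ring.
by apply: ler_wpM2r; rewrite ?mulr_ge0.
Qed.

Lemma budget_le eps delta n : 0 < eps < 1 -> 0 < delta < p / (1 - p) ->
  (budget p eps delta n)%:R <=
  4 / ((1 - 2 * p) * ln ((1 - p) / p)) * (eps^-1 * n%:R * ln delta^-1).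
Proof.
move=> /andP[eps_gt0 eps_lt1] /andP[delta_gt0 delta_lt].
have odds_lt1 : p / (1 - p) < 1.
  by rewrite ltr_pdivrMr // mul1r; have := p_lt_half; lra.
have delta01 : 0 < delta < 1 by rewrite delta_gt0 (lt_trans delta_lt).
have /andP[_ c_le] := threshold_bounds delta01.
set L := ln ((1 - p) / p); have L_gt0 : 0 < L := ln_odds_gt0.
set x := eps^-1 * (1 - 2 * p)^-1; set y := ln delta^-1 / L.
rewrite -/L -/y in c_le.
have x_ge1 : 1 <= x.
  rewrite mulr_ege1 // invf_ge1 ?ltW //; have := p_gt0; lra.
have y_ge1 : 1 <= y.
  rewrite ler_pdivlMr // mul1r ler_ln ?posrE ?invr_gt0 ?divr_gt0 //.
  by rewrite -invf_div lef_pV2 ?posrE ?divr_gt0 // ltW.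
have /andP[_ X_le] : x <= (`|Num.ceil x|%N)%:R <= x + 1.
  by apply: absz_ceil_bounds; apply: le_trans x_ge1.
have -> : 4 / ((1 - 2 * p) * L) * (eps^-1 * n%:R * ln delta^-1) =
          2 * x * (2 * y) * n%:R.
  by rewrite /x /y; field; rewrite !gt_eqF.
rewrite /budget -/x !natrM ler_wpM2r // ler_pM //; lra.
Qed.

Lemma alg_connected eps delta n (r : 'I_n -> bool) : 0 < eps -> 0 < delta < 1 ->
  (forall i, r i) -> 1 - eps <= prob_output p eps delta r true.
Proof.
move=> eps_gt0 delta01 r_true.
set c := threshold p delta; set B := budget p eps delta n.
set es := [seq r i | i <- enum 'I_n].
have es_true : all id es by apply/allP => _ /mapP[i _ ->].
have size_es : size es = n by rewrite size_map size_enum_ord.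
rewrite /prob_output prob_expect /alg -/c -/B -/es.
rewrite (_ : (fun w => _) = fun w => ((run_edges c es B 0 w).1)%:R); last first.
  by apply: funext => w; rewrite eqb_id.
suff fail_le : expect p B (fun w => (~~ (run_edges c es B 0 w).1)%:R) <= eps.
  by move: fail_le; rewrite expect_compl; lra.
have [n0|n_gt0] := posnP n.
  have -> : es = [::] by apply/size0nil; rewrite size_es n0.
  by rewrite expect_cst ltW.
have B_gt0 : 0 < B%:R :> R.
  rewrite -(pmulr_rgt0 _ eps_gt0); apply: lt_le_trans (budget_ge delta n eps_gt0).
  by rewrite divr_gt0 // ltr0n muln_gt0 n_gt0 threshold_gt0.
rewrite -(ler_pM2l B_gt0) [X in _ <= X]mulrC.
apply: le_trans (budget_ge delta n eps_gt0); rewrite -/c -/B -size_es.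
apply: le_trans (expect_run_edges_queries_le c es_true (leqnn B)).
apply: (expect_markov p01) => [w|w]; first exact: ler0n.
by move/run_edges_reject_queries ->; rewrite addn0.
Qed.

Lemma alg_disconnected eps delta n (r : 'I_n -> bool) : 0 < delta < 1 ->
  (exists i, ~~ r i) -> 1 - delta <= prob_output p eps delta r false.
Proof.
move=> delta01 [i ri].
rewrite /prob_output prob_expect.
rewrite (_ : (fun w => _) = fun w => (~~ (alg p eps delta r w).1)%:R); last first.
  by apply: funext => w; rewrite eqbF_neg.
rewrite expect_compl lerD2l lerN2; apply: le_trans (expr_threshold_le delta01).
apply: expect_run_edges_accept_le => //.
by apply/mapP; exists i; rewrite ?mem_enum // (negbTE ri).
Qed.

End Algorithm.

Lemma alg_queries_le (R : realType) (p eps delta : R) n (r : 'I_n -> bool) w :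
  ((alg p eps delta r w).2 <= budget p eps delta n)%N.
Proof.
have := run_edges_queries_le (threshold p delta) [seq r i | i <- enum 'I_n]
  (budget p eps delta n) 0 w.
by rewrite addn0.
Qed.

Theorem theorem1 (R : realType) (p : R) (hp0 : 0 < p) (hp1 : p < 1 / 2) :
  (forall (eps delta : R) (n : nat) (r : 'I_n -> bool),
      0 < eps < 1 -> 0 < delta < 1 ->
      ((forall i, r i) -> 1 - eps <= prob_output p eps delta r true) /\
      ((exists i, ~~ r i) -> 1 - delta <= prob_output p eps delta r false)) /\
  (exists (K delta0 : R), 0 < K /\ 0 < delta0 /\
     forall (eps delta : R) (n : nat) (r : 'I_n -> bool) (omega : nat -> bool),
       0 < eps < 1 -> 0 < delta < delta0 ->
       ((alg p eps delta r omega).2)%:R <= K * (eps^-1 * n%:R * ln (delta^-1))).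
Proof.
split=> [eps delta n r /andP[eps_gt0 _] delta01|].
  by split; [apply: alg_connected | apply: alg_disconnected].
have mu_gt0 : 0 < 1 - 2 * p by have := hp1; lra.
have q_gt0 : 0 < 1 - p by have := hp1; lra.
exists (4 / ((1 - 2 * p) * ln ((1 - p) / p))), (p / (1 - p)).
split; first by rewrite divr_gt0 // mulr_gt0 // ln_odds_gt0.
split=> [|eps delta n r w eps01 delta_bd]; first by rewrite divr_gt0.
apply: le_trans (budget_le hp0 hp1 n eps01 delta_bd).
by rewrite ler_nat alg_queries_le.
Qed.
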